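(* For every positive integer $n$, the pairs $(2n,3n)$ and $(2n,5n)$ are tame; that is, for every integer $c>3n$ there is a tame polynomial automorphism of $\mathbb{C}^3$ with multidegree $(2n,3n,c)$, and for every integer $c>5n$ there is a tame polynomial automorphism of $\mathbb{C}^3$ with multidegree $(2n,5n,c)$.
   Context: For a polynomial automorphism $F=(F_1,\ldots,F_n)$ of $\mathbb{C}^n$, its multidegree is $\operatorname{mdeg}F:=(\deg F_1,\ldots,\deg F_n)$, where $\deg$ is total degree. A map is elementary if it changes one coordinate $X_j$ to $X_j+g$ with $g$ a polynomial in the other variables and fixes the remaining coordinates. A polynomial automorphism is tame if it is a composition of invertible affine-linear maps and elementary maps. A pair $(a,b)$ of positive integers with $a<b$ and $a\nmid b$ is called tame if for every integer $c>b$ there exists a tame polynomial automorphism of $\mathbb{C}^3$ with multidegree $(a,b,c)$. *)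

(* Polynomials in three variables X1, X2, X3 over a field F are
   represented as nested univariate polynomials {poly {poly {poly F}}}:
   the outer variable is X3, the middle one X2, the innermost X1. *)
From HB Require Import structures.
From mathcomp Require Import all_boot all_order all_algebra.
Set Implicit Arguments. Unset Strict Implicit. Unset Printing Implicit Defensive.
Import Order.TTheory GRing.Theory Num.Theory.
Local Open Scope ring_scope.

Section Poly3.
Variable F : fieldType.

Definition P3 := {poly {poly {poly F}}}.

Definition map3 := 'I_3 -> P3.

Definition i0 : 'I_3 := @Ordinal 3 0 isT.
Definition i1 : 'I_3 := @Ordinal 3 1 isT.
Definition i2 : 'I_3 := @Ordinal 3 2 isT.

Definition cst3 (a : F) : P3 := a%:P%:P%:P.

Definition Xv (i : 'I_3) : P3 :=
  if i == i0 then ('X : {poly F})%:P%:P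
  else if i == i1 then ('X : {poly {poly F}})%:P
  else 'X.

(* coefficient of X1^k X2^j X3^i *)
Definition coef3 (p : P3) (k j i : nat) : F := ((p`_i)`_j)`_k.

Definition eval3 (p : P3) (q : map3) : P3 :=
  \sum_(i < size p) \sum_(j < size p`_i) \sum_(k < size (p`_i)`_j)
     cst3 (coef3 p k j i) * (q i0) ^+ k * (q i1) ^+ j * (q i2) ^+ i.

(* total degree (the zero polynomial gets degree 0; irrelevant here) *)
Definition tdeg (p : P3) : nat :=
  let s1 := size p in
  let s2 := fun i : nat => size (p`_i) in
  let s3 := fun i j : nat => size ((p`_i)`_j) in
  (\max_(i < s1) \max_(j < s2 i) \max_(k < s3 i j)
     (if coef3 p k j i != 0%R then i + j + k else 0))%N.

Definition mdeg (f : map3) : nat * nat * nat :=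
  (tdeg (f i0), tdeg (f i1), tdeg (f i2)).

Definition comp3 (f g : map3) : map3 := fun i => eval3 (f i) g.

Definition poly_automorphism (f : map3) : Prop :=
  exists g : map3, forall i, comp3 f g i = Xv i /\ comp3 g f i = Xv i.

Definition affine3 (f : map3) : Prop :=
  exists (A : 'M[F]_3) (b : 'I_3 -> F), \det A != 0 /\
    forall i, f i = \sum_(j < 3) cst3 (A i j) * Xv j + cst3 (b i).

(* elementary map: X_j -> X_j + g, g a polynomial in the other variables *)
Definition elementary3 (f : map3) : Prop :=
  exists (j : 'I_3) (g h : P3),
    g = eval3 h (fun i => if i == j then 0 else Xv i) /\
    forall i, f i = if i == j then Xv i + g else Xv i.

Inductive tame : map3 -> Prop :=
| tame_affine f : affine3 f -> tame f
| tame_elem f : elementary3 f -> tame f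
| tame_comp f g h : tame f -> tame g -> (forall i, h i = comp3 f g i) -> tame h.

Definition tame_pair (a b : nat) : Prop :=
  forall c : nat, (b < c)%N ->
    exists f : map3, tame f /\ poly_automorphism f /\ mdeg f = (a, b, c).

End Poly3.

From HB Require Import structures.
From mathcomp Require Import all_boot all_order all_algebra.
From mathcomp Require Import ring zify.

(* Given a tame automorphism Phi = (u, v, w), compose it with the triangular
   tame automorphism built from three elementary maps,
     (X1, X2, X3) |-> (X1 + X3^2, X2 + B(X1, X3), X3 + Q(X1', X2')),
   to get (f1, f2, f3) = (u + w^2, v + B(u, w), w + Q(f1, f2)).  For
   B = B3 = 2 w^3 + 3 u w and Q = f1^m (4 f1^3 - f2^2), the top powers of w in
   4 f1^3 - f2^2 cancel and its leading part is -4 v w^3; so if deg w = n,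
   deg v = k and u has degree 1, the multidegree is (2n, 3n, 2nm + 3n + k).
   The case 5n is identical with B5 and 64 f1^5 - f2^2 (leading part -16 v w^5).
   Degrees are computed by an upper bound on monomials together with the
   restriction to the X3-axis, where the leading coefficient is visible. *)

Set Implicit Arguments. Unset Strict Implicit. Unset Printing Implicit Defensive.
Import GRing.Theory Num.Theory.
Local Open Scope ring_scope.

Section Substitution.
Variable F : fieldType.
Local Notation P3 := (P3 F).
Local Notation map3 := (map3 F).
Local Notation Xv := (Xv F).

Definition const3 : {rmorphism F -> P3} := (polyC \o polyC \o polyC)%FUN.

(* Substitution [p |-> p(q_1, q_2, q_3)] as an iterated Horner evaluation,
   hence a ring morphism of P3. *)
Section Horner.
Variable q : map3.
Let comm1 : commr_rmorph const3 (q i0). Proof. by move=> a; exact: mulrC. Qed.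
Let ev1 : {rmorphism {poly F} -> P3} := horner_morph comm1.
Let comm2 : commr_rmorph ev1 (q i1). Proof. by move=> a; exact: mulrC. Qed.
Let ev2 : {rmorphism {poly {poly F}} -> P3} := horner_morph comm2.
Let comm3 : commr_rmorph ev2 (q i2). Proof. by move=> a; exact: mulrC. Qed.
Definition subst3 : {rmorphism P3 -> P3} := horner_morph comm3.

Let horner_morph_sum (R S : nzRingType) (f : {rmorphism R -> S}) u
    (cf : commr_rmorph f u) (p : {poly R}) :
  horner_morph cf p = \sum_(i < size p) f p`_i * u ^+ i.
Proof.
rewrite /horner_morph (@horner_coef_wide _ (size p)); last exact: size_poly.
by apply: eq_bigr => i _; rewrite coef_map.
Qed.

Lemma eval3E p : eval3 p q = subst3 p.
Proof.
rewrite -[subst3 p]/(horner_morph comm3 p) horner_morph_sum; apply: eq_bigr => i _.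
rewrite -[ev2 _]/(horner_morph comm2 _) horner_morph_sum mulr_suml; apply: eq_bigr => j _.
rewrite -[ev1 _]/(horner_morph comm1 _) horner_morph_sum !mulr_suml; apply: eq_bigr => k _.
by rewrite /coef3.
Qed.

Lemma eval3_Xv i : eval3 (Xv i) q = q i.
Proof.
rewrite eval3E /subst3 /=.
case: i => [[|[|[|//]]] ?]; rewrite /Xv /=.
- rewrite horner_morphC /ev2 /= horner_morphC /ev1 /= horner_morphX.
  by congr q; apply: val_inj.
- by rewrite horner_morphC /ev2 /= horner_morphX; congr q; apply: val_inj.
- by rewrite horner_morphX; congr q; apply: val_inj.
Qed.

Lemma eval3_cst a : eval3 (cst3 a) q = cst3 a.
Proof.
by rewrite eval3E /subst3 /= !horner_morphC /ev2 /= horner_morphC /ev1 /= horner_morphC.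
Qed.
End Horner.

Lemma eval3D (p p' : P3) (q : map3) : eval3 (p + p') q = eval3 p q + eval3 p' q.
Proof. by rewrite !eval3E rmorphD. Qed.
Lemma eval3X (p : P3) m (q : map3) : eval3 (p ^+ m) q = eval3 p q ^+ m.
Proof. by rewrite !eval3E rmorphXn. Qed.

Lemma rmorph_P3_eq (f g : {rmorphism P3 -> P3}) :
  (forall a, f (cst3 a) = g (cst3 a)) -> (forall i, f (Xv i) = g (Xv i)) ->
  forall p, f p = g p.
Proof.
move=> fg_cst fg_X.
have fg1 (d : {poly F}) : f d%:P%:P = g d%:P%:P.
  elim/poly_ind: d => [|d a IH]; first by rewrite !rmorph0.
  rewrite !rmorphD !rmorphM /= IH (fg_X i0); congr (_ + _); exact: fg_cst.
have fg2 (d : {poly {poly F}}) : f d%:P = g d%:P.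
  elim/poly_ind: d => [|d a IH]; first by rewrite !rmorph0.
  by rewrite !rmorphD !rmorphM /= IH (fg_X i1) fg1.
elim/poly_ind => [|d a IH]; first by rewrite !rmorph0.
by rewrite !rmorphD !rmorphM /= IH (fg_X i2) fg2.
Qed.

Lemma eval3_comp p (g h : map3) : eval3 (eval3 p g) h = eval3 p (comp3 g h).
Proof.
have := @rmorph_P3_eq (subst3 h \o subst3 g)%FUN (subst3 (comp3 g h)).
rewrite /= => /(_ _ _ p); rewrite -!eval3E; apply.
- by move=> a; rewrite -!eval3E !eval3_cst.
- by move=> i; rewrite -!eval3E !eval3_Xv.
Qed.

Lemma eval3_ext p (s t : map3) : (forall i, s i = t i) -> eval3 p s = eval3 p t.
Proof. by move=> st; rewrite /eval3 !st. Qed.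

End Substitution.

Section TameAutomorphisms.
Variable F : fieldType.
Local Notation P3 := (P3 F).
Local Notation map3 := (map3 F).
Local Notation Xv := (Xv F).

Definition tame_automorphism (f : map3) : Prop := tame f /\ poly_automorphism f.

Definition kill (j : 'I_3) : map3 := fun i => if i == j then 0 else Xv i.

Definition elem (j : 'I_3) (h : P3) : map3 :=
  fun i => if i == j then Xv i + eval3 h (kill j) else Xv i.

Lemma elem_eq j h : elem j h j = Xv j + eval3 h (kill j).
Proof. by rewrite /elem eqxx. Qed.
Lemma elem_neq j h i : i != j -> elem j h i = Xv i.
Proof. by move=> /negbTE ne; rewrite /elem ne. Qed.
Lemma kill_eq j : kill j j = 0.
Proof. by rewrite /kill eqxx. Qed.
Lemma kill_neq j i : i != j -> kill j i = Xv i.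
Proof. by move=> /negbTE ne; rewrite /kill ne. Qed.

Lemma eval3_kill_elem j h h' :
  eval3 (eval3 h (kill j)) (elem j h') = eval3 h (kill j).
Proof.
rewrite eval3_comp; apply: eval3_ext => i; rewrite /comp3.
case: (eqVneq i j) => [->|ne]; first by rewrite kill_eq eval3E rmorph0.
by rewrite kill_neq // eval3_Xv elem_neq.
Qed.

Lemma elemK j h i : comp3 (elem j h) (elem j (- h)) i = Xv i.
Proof.
rewrite /comp3; case: (eqVneq i j) => [->|ne]; last by rewrite elem_neq // eval3_Xv elem_neq.
rewrite elem_eq eval3D eval3_kill_elem eval3_Xv elem_eq.
by rewrite eval3E rmorphN /= -eval3E addrNK.
Qed.

Lemma tame_automorphism_elem j h : tame_automorphism (elem j h).
Proof.
split; first by apply: tame_elem; exists j, (eval3 h (kill j)), h.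
exists (elem j (- h)) => i; split; first exact: elemK.
by have := elemK j (- h) i; rewrite opprK.
Qed.

Lemma tame_automorphism_comp f g :
  tame_automorphism f -> tame_automorphism g -> tame_automorphism (comp3 f g).
Proof.
move=> [tf [f' ff']] [tg [g' gg']]; split; first exact: (tame_comp tf tg).
exists (comp3 g' f') => i; split; rewrite /comp3 eval3_comp.
- rewrite -[RHS](proj1 (ff' i)); apply: eval3_ext => j.
  by have := proj1 (gg' j); rewrite /comp3 -eval3_comp => ->; rewrite eval3_Xv.
- rewrite -[RHS](proj2 (gg' i)); apply: eval3_ext => j.
  by have := proj2 (ff' j); rewrite /comp3 -eval3_comp => ->; rewrite eval3_Xv.
Qed.

End TameAutomorphisms.

Ltac simpl_subst := rewrite ?(eval3D, eval3X, eval3_Xv) ?elem_eq ?kill_eq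
  ?(@elem_neq _ _ _ i0) ?(@elem_neq _ _ _ i1) ?(@elem_neq _ _ _ i2)
  ?(@kill_neq _ i0) ?(@kill_neq _ i1) ?(@kill_neq _ i2) //.

Section TotalDegree.
Variable F : fieldType.
Local Notation P3 := (P3 F).
Local Notation Xv := (Xv F).

Definition tle (p : P3) (e : nat) : Prop :=
  forall i j k, coef3 p k j i != 0 -> (i + j + k <= e)%N.

Lemma tle_trans p e e' : tle p e -> (e <= e')%N -> tle p e'.
Proof. by move=> pe le i j k /pe; move/leq_trans; apply. Qed.

Lemma tleD p q e : tle p e -> tle q e -> tle (p + q) e.
Proof.
move=> pe qe i j k; rewrite /coef3 !coefD.
have [p0|/pe //] := eqVneq (coef3 p k j i) 0.
by rewrite /coef3 in p0; rewrite p0 add0r; apply: qe.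
Qed.

Lemma tleN p e : tle p e -> tle (- p) e.
Proof. by move=> pe i j k; rewrite /coef3 !coefN oppr_eq0; apply: pe. Qed.

Lemma tleB p q e : tle p e -> tle q e -> tle (p - q) e.
Proof. by move=> pe qe; apply: tleD => //; apply: tleN. Qed.

Lemma tleM p q a b : tle p a -> tle q b -> tle (p * q) (a + b).
Proof.
move=> pa qb i j k; apply: contraR; rewrite -ltnNge => lt.
rewrite /coef3 coefM !coef_sum; apply/eqP; apply: big1 => -[l Hl] _ /=.
rewrite coefM coef_sum; apply: big1 => -[m Hm] _ /=.
rewrite coefM; apply: big1 => -[r Hr] _ /=.
have [p0|/pa p_le] := eqVneq (coef3 p r m l) 0.
  by rewrite /coef3 in p0; rewrite p0 mul0r.
have [q0|/qb q_le] := eqVneq (coef3 q (k - r) (j - m) (i - l)) 0.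
  by rewrite /coef3 in q0; rewrite q0 mulr0.
lia.
Qed.

Lemma tle_cst a : tle (cst3 a) 0.
Proof.
move=> [|i] [|j] [|k]; rewrite /coef3 /cst3 !coefC //= ?coefC ?coef0 ?eqxx //.
Qed.

Lemma tle1 : tle 1 0.
Proof. by have := @tle_cst 1; rewrite /cst3 !polyC1. Qed.

Lemma tle_nat m : tle m%:R 0.
Proof. by have := @tle_cst m%:R; rewrite /cst3 !rmorph_nat. Qed.

Lemma tleX p a m : tle p a -> tle (p ^+ m) (a * m).
Proof.
move=> pa; elim: m => [|m IH]; first by rewrite expr0 muln0; apply: tle1.
by rewrite exprS mulnS; apply: tleM.
Qed.

Lemma tle_Xv i : tle (Xv i) 1.
Proof.
case: i => -[|[|[|//]]] ? a b c; rewrite /Xv /coef3 /=.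
- by case: a b c => [|a] [|b] [|[|c]]; rewrite ?coefC ?coefX ?coef0 /= ?mulr0n ?eqxx.
- by case: a b c => [|a] [|[|b]] [|c]; rewrite ?coefC ?coefX ?coef1 ?coef0 /= ?mulr0n ?eqxx.
- case: a => [|[|a]]; rewrite coefX /= ?mulr0n ?mulr1n ?coef0 ?eqxx //.
  by case: b c => [|b] [|c]; rewrite coef1 /= ?coef0 ?coef1 /= ?mulr0n ?eqxx.
Qed.

Lemma tdeg_le (p : P3) e : tle p e -> (tdeg p <= e)%N.
Proof.
move=> pe; apply/bigmax_leqP => i _; apply/bigmax_leqP => j _.
by apply/bigmax_leqP => k _; case: ifP => // /pe.
Qed.

Lemma tdeg_ge (p : P3) i j k : coef3 p k j i != 0 -> (i + j + k <= tdeg p)%N.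
Proof.
move=> nz; have nz' := nz; rewrite /coef3 in nz'.
have lt_size (s : {poly _}) x : s`_x != 0 -> (x < size s)%N.
  by apply: contraR; rewrite -leqNgt => /(nth_default 0) ->.
have hk : (k < size ((p`_i)`_j)%R)%N by apply: lt_size.
have hj : (j < size (p`_i)%R)%N.
  by apply: lt_size; apply: contraTneq nz' => ->; rewrite coef0 eqxx.
have hi : (i < size p)%N.
  by apply: lt_size; apply: contraTneq nz' => ->; rewrite !coef0 eqxx.
apply: leq_trans (leq_bigmax (Ordinal hi)); apply: leq_trans (leq_bigmax (Ordinal hj)).
by apply: leq_trans (leq_bigmax (Ordinal hk)); rewrite /= nz.
Qed.

End TotalDegree.

Section AxisRestriction.
Variable F : fieldType.
Local Notation P3 := (P3 F).
Local Notation Xv := (Xv F).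

(* Restriction to the X3-axis, p |-> p(0, 0, X3).  A nonzero coefficient of
   X3^d in the restriction certifies a monomial of total degree d. *)
Definition axis : {rmorphism P3 -> {poly F}} :=
  map_poly (coefp 0 \o coefp 0 : {rmorphism {poly {poly F}} -> F})%FUN.

Lemma axis_coef p d : (axis p)`_d = coef3 p 0 0 d.
Proof. by rewrite /axis /= coef_map_id0 //= !coef0. Qed.

Lemma axis_X1 : axis (Xv i0) = 0.
Proof. by apply/polyP => -[|[|d]]; rewrite axis_coef /coef3 /= ?coefC ?coefX ?coef0. Qed.
Lemma axis_X2 : axis (Xv i1) = 0.
Proof. by apply/polyP => -[|[|d]]; rewrite axis_coef /coef3 /= ?coefC ?coefX ?coef0. Qed.
Lemma axis_X3 : axis (Xv i2) = 'X.
Proof. by apply/polyP => -[|[|d]]; rewrite axis_coef /coef3 /= ?coefX ?coef1 ?coef0. Qed.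

Definition dle (p : {poly F}) (e : nat) := (size p <= e.+1)%N.
Definition deq (p : {poly F}) (e : nat) := size p = e.+1.

Lemma dle_trans p e e' : dle p e -> (e <= e')%N -> dle p e'.
Proof. by rewrite /dle => pe le; apply: leq_trans pe _. Qed.
Lemma dle0 e : dle 0 e.
Proof. by rewrite /dle size_poly0. Qed.
Lemma dleD p q e : dle p e -> dle q e -> dle (p + q) e.
Proof. by rewrite /dle => pe qe; apply: leq_trans (size_polyD _ _) _; rewrite geq_max pe. Qed.
Lemma dleN p e : dle p e -> dle (- p) e.
Proof. by rewrite /dle size_polyN. Qed.
Lemma dleB p q e : dle p e -> dle q e -> dle (p - q) e.
Proof. by move=> pe qe; apply: dleD => //; apply: dleN. Qed.
Lemma dleM p q a b : dle p a -> dle q b -> dle (p * q) (a + b).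
Proof. by rewrite /dle => pa qb; have := size_polyMleq p q; lia. Qed.
Lemma dle1 : dle 1 0.
Proof. by rewrite /dle size_poly1. Qed.
Lemma dleX p a m : dle p a -> dle (p ^+ m) (a * m).
Proof.
move=> pa; elim: m => [|m IH]; first by rewrite expr0 muln0; apply: dle1.
by rewrite exprS mulnS; apply: dleM.
Qed.
Lemma dle_polyX : dle 'X 1.
Proof. by rewrite /dle size_polyX. Qed.
Lemma dle_nat m : dle m%:R 0.
Proof. by rewrite /dle -polyC_natr size_polyC; case: (_ != _). Qed.

Lemma deq_dle p e : deq p e -> dle p e.
Proof. by rewrite /deq /dle => ->. Qed.
Lemma deq_neq0 p e : deq p e -> p != 0.
Proof. by rewrite /deq -size_poly_eq0 => ->. Qed.
Lemma deqM p q a b : deq p a -> deq q b -> deq (p * q) (a + b).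
Proof.
move=> pa qb; rewrite /deq size_mul ?(deq_neq0 pa) ?(deq_neq0 qb) //.
by rewrite pa qb addSn addnS.
Qed.
Lemma deq1 : deq 1 0.
Proof. by rewrite /deq size_poly1. Qed.
Lemma deqX p a m : deq p a -> deq (p ^+ m) (a * m).
Proof.
move=> pa; elim: m => [|m IH]; first by rewrite expr0 muln0; apply: deq1.
by rewrite exprS mulnS; apply: deqM.
Qed.
Lemma deq_polyX : deq 'X 1.
Proof. by rewrite /deq size_polyX. Qed.
Lemma deq_polyXn m : deq ('X ^+ m) m.
Proof. by rewrite /deq size_polyXn. Qed.
Lemma deqDl p q a b : deq p a -> dle q b -> (b < a)%N -> deq (p + q) a.
Proof. by rewrite /deq /dle => pa qb lt; rewrite size_polyDl pa //; lia. Qed.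
Lemma deqDr p q a b : deq q a -> dle p b -> (b < a)%N -> deq (p + q) a.
Proof. by move=> qa pb lt; rewrite addrC; apply: deqDl qa pb lt. Qed.
Lemma deqN p a : deq p a -> deq (- p) a.
Proof. by rewrite /deq size_polyN. Qed.
Lemma deq_natM m p a : (m%:R : F) != 0 -> deq p a -> deq (m%:R * p) a.
Proof. by move=> m_neq0; rewrite /deq -polyC_natr size_Cmul. Qed.

Definition axial_deg (p : P3) (d : nat) := tle p d /\ deq (axis p) d.

Lemma tdeg_axial p d : axial_deg p d -> tdeg p = d.
Proof.
move=> [pd axis_d]; apply/eqP; rewrite eqn_leq tdeg_le //=.
have : coef3 p 0 0 d != 0.
  by rewrite -axis_coef -[d]/(d.+1.-1) -axis_d -lead_coefE lead_coef_eq0 (deq_neq0 axis_d).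
by move/tdeg_ge; rewrite !addn0.
Qed.

Lemma axial_degM p q a b : axial_deg p a -> axial_deg q b -> axial_deg (p * q) (a + b).
Proof. by move=> [pa ra] [qb rb]; split; [apply: tleM | rewrite rmorphM; apply: deqM]. Qed.

Lemma axial_degX p a m : axial_deg p a -> axial_deg (p ^+ m) (a * m).
Proof. by move=> [pa ra]; split; [apply: tleX | rewrite rmorphXn; apply: deqX]. Qed.

Lemma axial_degDr p q a b : axial_deg p a -> axial_deg q b -> (a < b)%N ->
  axial_deg (p + q) b.
Proof.
move=> [pa ra] [qb rb] lt; split; first by apply: tleD => //; apply: tle_trans (ltnW lt).
by rewrite rmorphD; apply: deqDr rb (deq_dle ra) lt.
Qed.

End AxisRestriction.

Arguments axis {F}.

(* B3 (resp. B5) is chosen so that in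
   D3 (u + w^2) (v + B3 u w) = 4 (u + w^2)^3 - (v + B3 u w)^2 (resp. for D5)
   all monomials that are pure powers of w cancel; what is left is linear
   in v in its top part, namely -4 v w^3 (resp. -16 v w^5). *)
Section CorrectionPolynomials.
Variable R : comNzRingType.

Definition B3 (a w : R) := 2%:R * w ^+ 3 + 3%:R * a * w.
Definition D3 (a b : R) := 4%:R * a ^+ 3 - b ^+ 2.
Definition B5 (a w : R) := 8%:R * w ^+ 5 + 20%:R * a * w ^+ 3 + 15%:R * a ^+ 2 * w.
Definition D5 (a b : R) := 64%:R * a ^+ 5 - b ^+ 2.

Lemma D3_cancel (u v w : R) : D3 (u + w ^+ 2) (v + B3 u w) =
  - (4%:R * v * w ^+ 3) + (4%:R * u ^+ 3 + 3%:R * u ^+ 2 * w ^+ 2 - v ^+ 2 - 6%:R * u * w * v).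
Proof. by rewrite /D3 /B3; ring. Qed.

Lemma D5_cancel (u v w : R) : D5 (u + w ^+ 2) (v + B5 u w) =
  - (16%:R * v * w ^+ 5) + (40%:R * u ^+ 3 * w ^+ 4 + 95%:R * u ^+ 4 * w ^+ 2 + 64%:R * u ^+ 5
     - 40%:R * u * v * w ^+ 3 - 30%:R * u ^+ 2 * v * w - v ^+ 2).
Proof. by rewrite /D5 /B5; ring. Qed.

End CorrectionPolynomials.

Section CorrectionMorphisms.
Variables (R S : comNzRingType) (f : {rmorphism R -> S}).

Lemma B3M a w : f (B3 a w) = B3 (f a) (f w).
Proof. by rewrite /B3 !(rmorphD, rmorphXn, rmorphM, rmorph_nat). Qed.
Lemma D3M a b : f (D3 a b) = D3 (f a) (f b).
Proof. by rewrite /D3 !(rmorphB, rmorphXn, rmorphM, rmorph_nat). Qed.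
Lemma B5M a w : f (B5 a w) = B5 (f a) (f w).
Proof. by rewrite /B5 !(rmorphD, rmorphXn, rmorphM, rmorph_nat). Qed.
Lemma D5M a b : f (D5 a b) = D5 (f a) (f b).
Proof. by rewrite /D5 !(rmorphB, rmorphXn, rmorphM, rmorph_nat). Qed.

End CorrectionMorphisms.

Section Construction.
Variable F : fieldType.
Local Notation P3 := (P3 F).
Local Notation map3 := (map3 F).
Local Notation X1 := (Xv F i0).
Local Notation X2 := (Xv F i1).
Local Notation X3 := (Xv F i2).

Definition natural2 (G : P3 -> P3 -> P3) : Prop :=
  forall (s : map3) a b, eval3 (G a b) s = G (eval3 a s) (eval3 b s).

Lemma natural2_rmorph (G : P3 -> P3 -> P3) :
  (forall (f : {rmorphism P3 -> P3}) a b, f (G a b) = G (f a) (f b)) -> natural2 G.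
Proof. by move=> GM s a b; rewrite !eval3E; apply: GM. Qed.

Variables (Bf Qf : P3 -> P3 -> P3).
Hypotheses (natB : natural2 Bf) (natQ : natural2 Qf).

Definition triangular : map3 :=
  comp3 (elem i2 (Qf X1 X2)) (comp3 (elem i0 (X3 ^+ 2)) (elem i1 (Bf X1 X3))).

Lemma tame_triangular : tame_automorphism triangular.
Proof.
by apply: tame_automorphism_comp; last apply: tame_automorphism_comp; apply: tame_automorphism_elem.
Qed.

Lemma triangular_compE (Phi : map3) :
  [/\ comp3 triangular Phi i0 = Phi i0 + Phi i2 ^+ 2,
      comp3 triangular Phi i1 = Phi i1 + Bf (Phi i0) (Phi i2)
    & comp3 triangular Phi i2 =
        Phi i2 + Qf (Phi i0 + Phi i2 ^+ 2) (Phi i1 + Bf (Phi i0) (Phi i2))].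
Proof. by split; rewrite /comp3 /triangular /comp3; do 3 (rewrite ?natB ?natQ; simpl_subst). Qed.

Lemma tame_of_axial_degrees (Phi : map3) a b c :
  tame_automorphism Phi ->
  axial_deg (Phi i0 + Phi i2 ^+ 2) a ->
  axial_deg (Phi i1 + Bf (Phi i0) (Phi i2)) b ->
  axial_deg (Phi i2 + Qf (Phi i0 + Phi i2 ^+ 2) (Phi i1 + Bf (Phi i0) (Phi i2))) c ->
  exists f : map3, tame f /\ poly_automorphism f /\ mdeg f = (a, b, c).
Proof.
move=> tPhi deg1 deg2 deg3.
have [tf af] := tame_automorphism_comp tame_triangular tPhi.
exists (comp3 triangular Phi); split=> //; split=> //.
rewrite /mdeg; have [-> -> ->] := triangular_compE Phi.
by rewrite (tdeg_axial deg1) (tdeg_axial deg2) (tdeg_axial deg3).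
Qed.

End Construction.

(* Closure tactics for degree bounds: split the outer sums, bound each
   summand by multiplicativity (inner sums must have equal bounds), and
   compare the resulting exponents with [lia]. *)
Ltac tle_mono := match goal with
  | |- tle (_ + _) _ => apply: tleD; tle_mono
  | |- tle (_ * _) _ => apply: tleM; tle_mono
  | |- tle (_ ^+ _) _ => apply: tleX; tle_mono
  | |- tle (- _) _ => apply: tleN; tle_mono
  | |- tle (Xv _ _) _ => apply: tle_Xv
  | |- tle (_ %:R) _ => apply: tle_nat
  | |- _ => eassumption
  end.
Ltac tle_auto := match goal with
  | |- tle (_ + _) _ => apply: tleD; tle_auto
  | |- tle (_ - _) _ => apply: tleB; tle_auto
  | |- tle (- _) _ => apply: tleN; tle_auto
  | |- _ => apply: tle_trans; [tle_mono | lia]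
  end.
Ltac dle_mono := match goal with
  | |- is_true (dle (_ + _) _) => apply: dleD; dle_mono
  | |- is_true (dle (_ * _) _) => apply: dleM; dle_mono
  | |- is_true (dle (_ ^+ _) _) => apply: dleX; dle_mono
  | |- is_true (dle (- _) _) => apply: dleN; dle_mono
  | |- is_true (dle 'X _) => apply: dle_polyX
  | |- is_true (dle (_ %:R) _) => apply: dle_nat
  | |- _ => first [eassumption | apply: deq_dle; eassumption]
  end.
Ltac dle_auto := match goal with
  | |- is_true (dle (_ + _) _) => apply: dleD; dle_auto
  | |- is_true (dle (_ - _) _) => apply: dleB; dle_auto
  | |- is_true (dle (- _) _) => apply: dleN; dle_auto
  | |- _ => apply: dle_trans; [dle_mono | lia]
  end.

Section CharacteristicZero.
Variable F : fieldType.
Hypothesis charF : [pchar F] =i pred0.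
Local Notation P3 := (P3 F).
Local Notation map3 := (map3 F).
Local Notation X1 := (Xv F i0).
Local Notation X2 := (Xv F i1).
Local Notation X3 := (Xv F i2).

Let natr_neq0 m : (m.+1%:R : F) != 0.
Proof. by rewrite ((pcharf0P F).1 charF). Qed.

Lemma deq_polyX_Xn n : (0 < n)%N -> deq ('X + 'X ^+ n : {poly F}) n.
Proof.
case: n => [//|[|n]] _; last exact: (deqDr (deq_polyXn _ _) (dle_polyX _)).
by rewrite expr1 -mulr2n -mulr_natl; apply: deq_natM (natr_neq0 1) (deq_polyX _).
Qed.

Record seed (Phi : map3) (n k e : nat) : Prop := Seed {
  seed_tame : tame_automorphism Phi;
  seed_u : tle (Phi i0) 1;
  seed_u_axis : dle (axis (Phi i0)) e;
  seed_v : axial_deg (Phi i1) k;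
  seed_w : axial_deg (Phi i2) n }.

(* (X1, X2 + X3, X3 + (X2 + X3)^n), a seed of type (n, 1, 0). *)
Definition seed_map1 n : map3 := comp3 (elem i2 (X2 ^+ n)) (elem i1 X3).

(* (X1 + X3, X2 + (X1 + X3)^k, X3 + (X1 + X3)^n), a seed of type (n, k, 1). *)
Definition seed_map2 n k : map3 :=
  comp3 (comp3 (elem i1 (X1 ^+ k)) (elem i2 (X1 ^+ n))) (elem i0 X3).

Lemma seed1 n : (0 < n)%N -> seed (seed_map1 n) n 1 0.
Proof.
move=> n_gt0; have tPhi : tame_automorphism (seed_map1 n).
  by apply: tame_automorphism_comp; apply: tame_automorphism_elem.
have [E0 E1 E2] : [/\ seed_map1 n i0 = X1, seed_map1 n i1 = X2 + X3
                    & seed_map1 n i2 = X3 + (X2 + X3) ^+ n].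
  by split; rewrite /seed_map1 /comp3; do 4 simpl_subst.
constructor; rewrite ?E0 ?E1 ?E2 //; first exact: tle_Xv.
- by rewrite axis_X1; apply: dle0.
- split; first by tle_auto.
  by rewrite rmorphD axis_X2 axis_X3 add0r; apply: deq_polyX.
- split; first by tle_auto.
  by rewrite rmorphD rmorphXn rmorphD axis_X2 axis_X3 add0r; apply: deq_polyX_Xn.
Qed.

Lemma seed2 n k : (0 < n)%N -> (0 < k)%N -> seed (seed_map2 n k) n k 1.
Proof.
move=> n_gt0 k_gt0; have tPhi : tame_automorphism (seed_map2 n k).
  by apply: tame_automorphism_comp; first apply: tame_automorphism_comp;
    apply: tame_automorphism_elem.
have [E0 E1 E2] : [/\ seed_map2 n k i0 = X1 + X3, seed_map2 n k i1 = X2 + (X1 + X3) ^+ k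
                    & seed_map2 n k i2 = X3 + (X1 + X3) ^+ n].
  by split; rewrite /seed_map2 /comp3; do 4 simpl_subst.
constructor; rewrite ?E0 ?E1 ?E2 //; first by tle_auto.
- by rewrite rmorphD axis_X1 axis_X3 add0r; apply: dle_polyX.
- split; first by tle_auto.
  by rewrite rmorphD rmorphXn rmorphD axis_X1 axis_X2 axis_X3 !add0r; apply: deq_polyXn.
- split; first by tle_auto.
  by rewrite rmorphD rmorphXn rmorphD axis_X1 axis_X3 add0r; apply: deq_polyX_Xn.
Qed.

(* Seeds exist for every type (n, k) with n, k > 0; only k = 1 needs e = 0. *)
Lemma seed_exists n k : (0 < n)%N -> (0 < k)%N ->
  exists Phi e, [/\ seed Phi n k e, (e <= 1)%N & (e < k)%N].
Proof.
move=> n_gt0 k_gt0; case: (ltnP 1 k) => [k_gt1 | k_le1].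
  by exists (seed_map2 n k), 1%N; split=> //; apply: seed2.
have -> : k = 1%N by lia.
by exists (seed_map1 n), 0%N; split=> //; apply: seed1.
Qed.

Section ComponentDegrees.
Variables (Phi : map3) (n k e : nat).
Hypotheses (seedPhi : seed Phi n k e) (n_gt0 : (0 < n)%N) (e_le1 : (e <= 1)%N).
Local Notation u := (Phi i0).
Local Notation v := (Phi i1).
Local Notation w := (Phi i2).

Let tu : tle u 1 := seed_u seedPhi.
Let ru : dle (axis u) e := seed_u_axis seedPhi.
Let tv : tle v k := (seed_v seedPhi).1.
Let rv : deq (axis v) k := (seed_v seedPhi).2.
Let tw : tle w n := (seed_w seedPhi).1.
Let rw : deq (axis w) n := (seed_w seedPhi).2.

Let deq_axis_wX m : deq (axis w ^+ m) (m * n).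
Proof. by rewrite mulnC; apply: deqX. Qed.

Lemma axial_f1 : axial_deg (u + w ^+ 2) (2 * n).
Proof.
split; first by tle_auto.
by rewrite rmorphD rmorphXn; apply: deqDr (deq_axis_wX 2) ru _; lia.
Qed.

Lemma axial_f2_3 : (k < 3 * n)%N -> axial_deg (v + B3 u w) (3 * n).
Proof.
move=> k_lt; split; first by rewrite /B3; tle_auto.
rewrite rmorphD B3M /B3; apply: deqDr k_lt; last exact: deq_dle.
apply: deqDl (_ : dle _ (e + n)) _; [ | by dle_auto | lia].
exact: deq_natM (natr_neq0 1) (deq_axis_wX 3).
Qed.

(* The leading part -4 v w^3 of D3(f1, f2) survives. *)
Lemma axial_D3 : (k < 3 * n)%N -> (e < k)%N ->
  axial_deg (D3 (u + w ^+ 2) (v + B3 u w)) (3 * n + k).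
Proof.
move=> k_lt e_lt; split; first by rewrite D3_cancel; tle_auto.
rewrite D3M rmorphD rmorphXn rmorphD B3M D3_cancel.
apply: deqDl (_ : dle _ (3 * n + k - 1)) _; [ | by dle_auto | lia].
apply: deqN; rewrite -mulrA; apply: deq_natM (natr_neq0 3) _.
by rewrite addnC; apply: deqM rv (deq_axis_wX 3).
Qed.

Lemma axial_f2_5 : (k < 5 * n)%N -> axial_deg (v + B5 u w) (5 * n).
Proof.
move=> k_lt; split; first by rewrite /B5; tle_auto.
rewrite rmorphD B5M /B5; apply: deqDr k_lt; last exact: deq_dle.
rewrite -addrA; apply: deqDl (_ : dle _ (5 * n - 1)) _; [ | by dle_auto | lia].
exact: deq_natM (natr_neq0 7) (deq_axis_wX 5).
Qed.

(* The leading part -16 v w^5 of D5(f1, f2) survives. *)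
Lemma axial_D5 : (k < 5 * n)%N -> (2 < n + k)%N -> (3 * e < n + k)%N ->
  axial_deg (D5 (u + w ^+ 2) (v + B5 u w)) (5 * n + k).
Proof.
move=> k_lt nk_gt2 e_lt; split; first by rewrite D5_cancel; tle_auto.
rewrite D5M rmorphD rmorphXn rmorphD B5M D5_cancel.
apply: deqDl (_ : dle _ (5 * n + k - 1)) _; [ | by dle_auto | lia].
apply: deqN; rewrite -mulrA; apply: deq_natM (natr_neq0 15) _.
by rewrite addnC; apply: deqM rv (deq_axis_wX 5).
Qed.

Lemma tame_mdeg_3 m : (e < k)%N -> (k < 3 * n)%N ->
  exists f : map3, tame f /\ poly_automorphism f /\
    mdeg f = (2 * n, 3 * n, 2 * n * m + (3 * n + k))%N.
Proof.
move=> e_lt k_lt.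
have natB : natural2 (@B3 P3) by apply: natural2_rmorph => f a b; apply: B3M.
have natQ : natural2 (fun a b : P3 => a ^+ m * D3 a b).
  by apply: natural2_rmorph => f a b; rewrite rmorphM rmorphXn D3M.
apply: (tame_of_axial_degrees natB natQ (seed_tame seedPhi) axial_f1 (axial_f2_3 k_lt)).
apply: axial_degDr (seed_w seedPhi) (axial_degM (axial_degX m axial_f1) (axial_D3 k_lt e_lt)) _; lia.
Qed.

Lemma tame_mdeg_5 m : (k < 5 * n)%N -> (2 < n + k)%N -> (3 * e < n + k)%N ->
  exists f : map3, tame f /\ poly_automorphism f /\
    mdeg f = (2 * n, 5 * n, 2 * n * m + (5 * n + k))%N.
Proof.
move=> k_lt nk_gt2 e_lt.
have natB : natural2 (@B5 P3) by apply: natural2_rmorph => f a b; apply: B5M.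
have natQ : natural2 (fun a b : P3 => a ^+ m * D5 a b).
  by apply: natural2_rmorph => f a b; rewrite rmorphM rmorphXn D5M.
apply: (tame_of_axial_degrees natB natQ (seed_tame seedPhi) axial_f1 (axial_f2_5 k_lt)).
apply: axial_degDr (seed_w seedPhi) (axial_degM (axial_degX m axial_f1) (axial_D5 k_lt nk_gt2 e_lt)) _; lia.
Qed.

Lemma tame_mdeg_5_monomial m j : (k < 5 * n)%N -> (n < 2 * n * m + 5 * n * j)%N ->
  exists f : map3, tame f /\ poly_automorphism f /\
    mdeg f = (2 * n, 5 * n, 2 * n * m + 5 * n * j)%N.
Proof.
move=> k_lt c_gt.
have natB : natural2 (@B5 P3) by apply: natural2_rmorph => f a b; apply: B5M.
have natQ : natural2 (fun a b : P3 => a ^+ m * b ^+ j).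
  by apply: natural2_rmorph => f a b; rewrite rmorphM !rmorphXn.
apply: (tame_of_axial_degrees natB natQ (seed_tame seedPhi) axial_f1 (axial_f2_5 k_lt)).
exact: axial_degDr (seed_w seedPhi)
  (axial_degM (axial_degX m axial_f1) (axial_degX j (axial_f2_5 k_lt))) c_gt.
Qed.

End ComponentDegrees.

End CharacteristicZero.

Local Close Scope ring_scope.

Lemma split_above (b c d : nat) : 0 < d -> b < c ->
  exists m k, c = d * m + (b + k) /\ 0 < k <= d.
Proof.
move=> d_gt0 b_lt_c; exists ((c - b - 1) %/ d), ((c - b - 1) %% d).+1.
have := divn_eq (c - b - 1) d; have := ltn_pmod (c - b - 1) d_gt0; nia.
Qed.

Lemma two_five_combination (c : nat) : 3 < c -> exists m j, c = 2 * m + 5 * j.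
Proof.
move=> c_gt3; have := odd_double_half c; rewrite -muln2.
by case: (odd c) => /= c_eq; [exists (c./2 - 2), 1 | exists c./2, 0]; lia.
Qed.

Section Tameness.
Variable F : fieldType.
Hypothesis charF : [pchar F]%R =i pred0.

(* (2n, 3n) is tame: write c = 2nm + (3n + k) with 0 < k <= 2n. *)
Lemma tame_pair_2n_3n n c : 0 < n -> 3 * n < c ->
  exists f : map3 F, tame f /\ poly_automorphism f /\ mdeg f = (2 * n, 3 * n, c).
Proof.
move=> n_gt0 c_gt; have [||m [k [-> /andP[k_gt0 k_le]]]] := @split_above (3 * n) c (2 * n); try lia.
have [Phi [e [seedPhi e_le1 e_lt]]] := seed_exists charF n_gt0 k_gt0.
by apply: (tame_mdeg_3 charF seedPhi n_gt0 e_le1 m e_lt); lia.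
Qed.

(* (2n, 5n) is tame: for n >= 2 as above with D5; for n = 1 the third
   component w + f1^m f2^j already realizes every degree c = 2m + 5j. *)
Lemma tame_pair_2n_5n n c : 0 < n -> 5 * n < c ->
  exists f : map3 F, tame f /\ poly_automorphism f /\ mdeg f = (2 * n, 5 * n, c).
Proof.
move=> n_gt0 c_gt; case: (ltnP 1 n) => [n_gt1 | n_le1].
  have [||m [k [-> /andP[k_gt0 k_le]]]] := @split_above (5 * n) c (2 * n); try lia.
  have [Phi [e [seedPhi e_le1 e_lt]]] := seed_exists charF n_gt0 k_gt0.
  by apply: (tame_mdeg_5 charF seedPhi n_gt0 e_le1 m); lia.
have n1 : n = 1 by lia.
have [Phi [e [seedPhi e_le1 _]]] := seed_exists charF n_gt0 (ltn0Sn 0).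
have [|m [j c_eq]] := two_five_combination (c := c); first by lia.
have := tame_mdeg_5_monomial charF seedPhi n_gt0 e_le1 (m := m) (j := j).
by rewrite n1 !muln1 -c_eq; apply; lia.
Qed.

End Tameness.

Theorem corollary2 (F : numClosedFieldType) (n : nat) :
  (0 < n)%N ->
  (forall c : nat, (3 * n < c)%N ->
     exists f : map3 F, tame f /\ poly_automorphism f /\ mdeg f = (2 * n, 3 * n, c)%N) /\
  (forall c : nat, (5 * n < c)%N ->
     exists f : map3 F, tame f /\ poly_automorphism f /\ mdeg f = (2 * n, 5 * n, c)%N).
Proof.
move=> n_gt0; have charF := @pchar_num F.
by split=> c c_gt; [apply: tame_pair_2n_3n | apply: tame_pair_2n_5n].
Qed.
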